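(* Assume (H1) and (H2) as in the context. Let $G:S^1\times(a,b)\to\mathbb{R}$ be $G(\zeta,s)=\langle\varphi(1,s),\zeta\rangle$, with $G_s,G_{ss}$ its first and second partial derivatives in $s$. Then for every $\zeta=(\zeta_1,\zeta_2)\in S^1$ and every $s\in(a,b)$, $$\alpha_1^2\det\big(\zeta_1\varphi_1''(1,s)+\zeta_2\varphi_2''(1,s)\big)=m(m-\alpha_1)(GG_{ss})(\zeta,s)+\alpha_2(\alpha_1-\alpha_2)\,s\,(G_sG_{ss})(\zeta,s)-(m-\alpha_2)^2G_s^2(\zeta,s).$$
   Context: Fix $\alpha_1,\alpha_2>0$ with $\alpha_1\neq\alpha_2$. For $t>0$ and $x=(x_1,x_2)\in\mathbb{R}^2$ put $t\bullet x=(t^{\alpha_1}x_1,t^{\alpha_2}x_2)$. For $a<b$ let $V^{a,b}=\{t\bullet(1,s):a<s<b,\ t>0\}$ and $\varphi=(\varphi_1,\varphi_2):V^{a,b}\to\mathbb{R}^2$; $\varphi_j''(x)$ denotes the Hessian of $\varphi_j$ at $x$. (H1) $\varphi$ is real analytic on $V^{a,b}$. (H2) For some $m\ge3(\alpha_1+\alpha_2)$, $\varphi(t\bullet x)=t^m\varphi(x)$ for all $x\in V^{a,b}$, $t>0$. *)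

From Stdlib Require Import Reals Lra.
From Coquelicot Require Import Coquelicot.
Open Scope R_scope.

Definition dil (a1 a2 t : R) (x : R * R) : R * R :=
  (Rpower t a1 * fst x, Rpower t a2 * snd x).

Definition Vab (a1 a2 a b : R) (x : R * R) : Prop :=
  exists t s, 0 < t /\ a < s < b /\ x = dil a1 a2 t (1, s).

(* Real analyticity of f : R^2 -> R at x0: near x0, f is the sum of an
   absolutely convergent double power series centred at x0. *)
Definition analytic_at (f : R * R -> R) (x0 : R * R) : Prop :=
  exists (r : R) (c : nat -> nat -> R), 0 < r /\
    forall x : R * R,
      Rabs (fst x - fst x0) < r -> Rabs (snd x - snd x0) < r ->
      (forall i, ex_series (fun j =>
          Rabs (c i j) * Rabs (fst x - fst x0) ^ i * Rabs (snd x - snd x0) ^ j)) /\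
      ex_series (fun i => Series (fun j =>
          Rabs (c i j) * Rabs (fst x - fst x0) ^ i * Rabs (snd x - snd x0) ^ j)) /\
      f x = Series (fun i => Series (fun j =>
          c i j * (fst x - fst x0) ^ i * (snd x - snd x0) ^ j)).

Definition analytic_on (U : R * R -> Prop) (f : R * R -> R) : Prop :=
  forall x, U x -> analytic_at f x.

Definition d1 (f : R * R -> R) (x : R * R) : R :=
  Derive (fun u => f (u, snd x)) (fst x).
Definition d2 (f : R * R -> R) (x : R * R) : R :=
  Derive (fun v => f (fst x, v)) (snd x).

(* Hessian entries: hess i j f x = d_j (d_i f) (x) (row i, column j). *)
Definition hess (i j : nat) (f : R * R -> R) (x : R * R) : R :=
  let g := if Nat.eqb i 1 then d1 f else d2 f in
  if Nat.eqb j 1 then d1 g x else d2 g x.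

Definition det_comb_hess (z1 z2 : R) (f1 f2 : R * R -> R) (x : R * R) : R :=
  let A i j := z1 * hess i j f1 x + z2 * hess i j f2 x in
  A 1%nat 1%nat * A 2%nat 2%nat - A 1%nat 2%nat * A 2%nat 1%nat.

(* Write mu = m/a1 and be = a2/a1.  Taking t = u^(1/a1) in (H2) shows that near (1, s)
   each phi_j is u^mu g(v u^(-be)), where g(v) = phi_j(1, v) is twice differentiable near s
   because phi_j is analytic.  Partial derivatives of such functions are of the same form:
   d/du has degree mu - 1 and profile mu g - be w g'(w), d/dv has degree mu - be and profile
   g'.  Evaluating at u = 1 expresses the Hessian of phi_j at (1, s) through g(s), g'(s),
   g''(s); these expressions are linear in g, so the identity for G(zeta, .) = zeta1 g_1 +
   zeta2 g_2 becomes a polynomial identity in mu, be, s. *)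

From Pilot Require Import Defs.
From Stdlib Require Import Reals Lra.
From Coquelicot Require Import Coquelicot.
Open Scope R_scope.

Lemma analytic_at_slice_PSeries (f : R * R -> R) (x0 : R * R) :
  analytic_at f x0 -> exists (r : R) (A : nat -> R), 0 < r /\
    (forall y, Rabs y < r -> Rbar_lt (Rabs y) (CV_radius A)) /\
    (forall y, Rabs y < r -> f (fst x0, snd x0 + y) = PSeries A y).
Proof.
  intros [r [c [hr Hc]]].
  exists r, (c 0%nat). split; [exact hr|].
  assert (Hslice : forall y, Rabs y < r ->
    (forall i, ex_series (fun j => Rabs (c i j) * Rabs 0 ^ i * Rabs y ^ j)) /\
    f (fst x0, snd x0 + y) = Series (fun i => Series (fun j => c i j * 0 ^ i * y ^ j))).
  { intros y hy.
    specialize (Hc (fst x0, snd x0 + y)); simpl in Hc.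
    rewrite Rminus_diag in Hc. replace (snd x0 + y - snd x0) with y in Hc by ring.
    destruct (Hc ltac:(rewrite Rabs_R0; exact hr) hy) as [Hex [_ Hf]].
    split; assumption. }
  split.
  - intros y hy.
    set (y' := (Rabs y + r) / 2).
    assert (hy' : 0 <= Rabs y /\ Rabs y < y' /\ y' < r)
      by (pose proof (Rabs_pos y); unfold y'; lra).
    assert (disk : CV_disk (c 0%nat) y').
    { destruct (Hslice y' ltac:(rewrite Rabs_pos_eq; lra)) as [Hex _].
      eapply ex_series_ext; [|exact (Hex 0%nat)]. intros j; simpl.
      rewrite Rabs_mult, <- RPow_abs. ring. }
    eapply Rbar_lt_le_trans; [|exact (proj1 (Lub_Rbar_correct _) y' disk)].
    simpl. lra.
  - intros y hy. rewrite (proj2 (Hslice y hy)).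
    (* the outer series is a power series evaluated at [fst x - fst x0 = 0] *)
    transitivity (PSeries (fun i => PSeries (c i) y) 0).
    + apply Series_ext. intros i. unfold PSeries.
      rewrite <- Series_scal_r. apply Series_ext. intros j. ring.
    + apply PSeries_0.
Qed.

Lemma analytic_at_slice_C2 (f : R * R -> R) (x0 : R * R) :
  analytic_at f x0 ->
  let g := fun v => f (fst x0, v) in
  locally (snd x0) (fun v => ex_derive g v /\ ex_derive (Derive g) v).
Proof.
  intros Hf g.
  destruct (analytic_at_slice_PSeries f x0 Hf) as [r [A [hr [Hrad Heq]]]].
  set (s := snd x0) in *.
  apply (filter_imp (fun v => locally v (ball s r))).
  2: exact (locally_locally _ _ (locally_ball s (mkposreal r hr))).
  intros v Hv.
  assert (Hg : locally v (fun t => PSeries A (t + - s) = g t)).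
  { revert Hv. apply filter_imp. intros t ht.
    unfold g. rewrite <- Heq by exact ht. f_equal. f_equal. ring. }
  assert (Hh : forall n, ex_derive_n (fun t => PSeries A (t + - s)) n v).
  { intros n. apply ex_derive_n_comp_trans, ex_derive_n_PSeries, Hrad.
    exact (locally_singleton _ _ Hv). }
  split.
  - exact (ex_derive_n_ext_loc _ _ 1 v Hg (Hh 1%nat)).
  - exact (ex_derive_n_ext_loc _ _ 2 v Hg (Hh 2%nat)).
Qed.

Lemma d1_ext_locally (f F : R * R -> R) (x y : R) :
  locally_2d (fun u v => f (u, v) = F (u, v)) x y -> Defs.d1 f (x, y) = Defs.d1 F (x, y).
Proof. intros H. apply Derive_ext_loc. exact (locally_2d_1d_const_y _ _ _ H). Qed.

Lemma d2_ext_locally (f F : R * R -> R) (x y : R) :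
  locally_2d (fun u v => f (u, v) = F (u, v)) x y -> Defs.d2 f (x, y) = Defs.d2 F (x, y).
Proof. intros H. apply Derive_ext_loc. exact (locally_2d_1d_const_x _ _ _ H). Qed.

Lemma hess_ext_locally (i j : nat) (f F : R * R -> R) (x y : R) :
  locally_2d (fun u v => f (u, v) = F (u, v)) x y ->
  hess i j f (x, y) = hess i j F (x, y).
Proof.
  intros H.
  assert (H1 : locally_2d (fun u v => Defs.d1 f (u, v) = Defs.d1 F (u, v)) x y).
  { eapply locally_2d_impl_strong; [apply locally_2d_forall | exact H].
    intros u v. apply d1_ext_locally. }
  assert (H2 : locally_2d (fun u v => Defs.d2 f (u, v) = Defs.d2 F (u, v)) x y).
  { eapply locally_2d_impl_strong; [apply locally_2d_forall | exact H].
    intros u v. apply d2_ext_locally. }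
  unfold hess.
  destruct (Nat.eqb i 1), (Nat.eqb j 1);
    (apply d1_ext_locally || apply d2_ext_locally); assumption.
Qed.

Lemma Rpower_1_l (c : R) : Rpower 1 c = 1.
Proof. unfold Rpower. rewrite ln_1, Rmult_0_r. apply exp_0. Qed.

Lemma Vab_line (a1 a2 a b s : R) : a < s < b -> Vab a1 a2 a b (1, s).
Proof.
  intros hs. exists 1, s. split; [lra|]. split; [exact hs|].
  unfold dil; simpl. rewrite !Rpower_1_l, !Rmult_1_l. reflexivity.
Qed.

(* The function homogeneous of degree [mu] for the dilations
   [(u, v) -> (t u, t^be v)] that agrees with [g] on the line [u = 1]. *)
Definition qh_ext (mu be : R) (g : R -> R) (p : R * R) : R :=
  Rpower (fst p) mu * g (snd p * Rpower (fst p) (- be)).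

Lemma qh_ext_at_1 (mu be : R) (g : R -> R) (v : R) : qh_ext mu be g (1, v) = g v.
Proof. unfold qh_ext; simpl. rewrite !Rpower_1_l, Rmult_1_l, Rmult_1_r. reflexivity. Qed.

Lemma homogeneous_qh_ext (a1 a2 a b m : R) (f : R * R -> R) (ha1 : 0 < a1)
  (Hhom : forall x t, Vab a1 a2 a b x -> 0 < t ->
            f (dil a1 a2 t x) = Rpower t m * f x)
  (u v : R) :
  0 < u -> a < v * Rpower u (- (a2 / a1)) < b ->
  f (u, v) = qh_ext (m / a1) (a2 / a1) (fun v => f (1, v)) (u, v).
Proof.
  intros hu hw. unfold qh_ext; simpl.
  set (w := v * Rpower u (- (a2 / a1))) in *.
  assert (Hdil : dil a1 a2 (Rpower u (/ a1)) (1, w) = (u, v)).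
  { unfold dil, w; simpl. rewrite !Rpower_mult.
    replace (/ a1 * a1) with 1 by (field; lra).
    rewrite Rpower_1 by exact hu.
    rewrite (Rmult_comm v), <- Rmult_assoc, <- Rpower_plus.
    replace (/ a1 * a2 + - (a2 / a1)) with 0 by (field; lra).
    rewrite Rpower_O by exact hu. f_equal; ring. }
  rewrite <- Hdil, Hhom by (exact (Vab_line a1 a2 a b w hw) || apply exp_pos).
  rewrite Rpower_mult. do 2 f_equal. field. lra.
Qed.

Lemma locally_2d_qh_chart (be s : R) (P : R -> Prop) :
  locally s P -> locally_2d (fun u v => 0 < u /\ P (v * Rpower u (- be))) 1 s.
Proof.
  intros [eps HP].
  assert (Hcont : continuity_2d_pt (fun u v => v * Rpower u (- be)) 1 s).
  { apply continuity_2d_pt_mult; [apply continuity_2d_pt_id2|].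
    apply (continuity_1d_2d_pt_comp (fun u => Rpower u (- be)) (fun u _ => u));
      [|apply continuity_2d_pt_id1].
    apply derivable_continuous_pt. exists (- be * Rpower 1 (- be - 1)).
    apply derivable_pt_lim_power; lra. }
  apply locally_2d_and.
  - exists (mkposreal 1 Rlt_0_1). intros u v hu _. simpl in hu.
    apply Rabs_def2 in hu. lra.
  - eapply locally_2d_impl; [apply locally_2d_forall | exact (Hcont eps)].
    intros u v Huv. apply HP.
    cbv beta in Huv. rewrite Rpower_1_l, Rmult_1_r in Huv. exact Huv.
Qed.

Lemma homogeneous_qh_ext_locally (a1 a2 a b m s : R) (f : R * R -> R)
  (ha1 : 0 < a1)
  (Hhom : forall x t, Vab a1 a2 a b x -> 0 < t ->
            f (dil a1 a2 t x) = Rpower t m * f x) :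
  a < s < b ->
  locally_2d (fun u v => f (u, v) = qh_ext (m / a1) (a2 / a1) (fun v => f (1, v)) (u, v)) 1 s.
Proof.
  intros hs.
  assert (Hab : locally s (fun w => a < w < b)).
  { apply (locally_interval _ s a b); simpl; [lra|lra|]. intros w hw1 hw2; simpl in *; lra. }
  eapply locally_2d_impl; [apply locally_2d_forall | exact (locally_2d_qh_chart (a2 / a1) s _ Hab)].
  intros u v [hu hw].
  exact (homogeneous_qh_ext a1 a2 a b m f ha1 Hhom u v hu hw).
Qed.

Definition qh_d1_profile (mu be : R) (g : R -> R) (w : R) : R :=
  mu * g w - be * w * Derive g w.

Lemma d1_qh_ext (mu be : R) (g : R -> R) (u v : R) :
  0 < u -> ex_derive g (v * Rpower u (- be)) ->
  Defs.d1 (qh_ext mu be g) (u, v) = qh_ext (mu - 1) be (qh_d1_profile mu be g) (u, v).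
Proof.
  intros hu hg. unfold Defs.d1, qh_ext, qh_d1_profile; simpl.
  unfold Rpower in *.
  replace ((mu - 1) * ln u) with (mu * ln u + - ln u) by ring.
  rewrite exp_plus, exp_Ropp, exp_ln by exact hu.
  apply is_derive_unique. auto_derive.
  - auto.
  - change (fun x : R => g x) with g. field. lra.
Qed.

Lemma d2_qh_ext (mu be : R) (g : R -> R) (u v : R) :
  ex_derive g (v * Rpower u (- be)) ->
  Defs.d2 (qh_ext mu be g) (u, v) = qh_ext (mu - be) be (Derive g) (u, v).
Proof.
  intros hg. unfold Defs.d2, qh_ext; simpl.
  unfold Rpower in *.
  replace ((mu - be) * ln u) with (mu * ln u + - be * ln u) by ring.
  rewrite exp_plus.
  apply is_derive_unique. auto_derive.
  - auto.
  - change (fun x : R => g x) with g. ring.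
Qed.

Lemma d1_qh_ext_at_1 (mu be : R) (g : R -> R) (s : R) :
  ex_derive g s -> Defs.d1 (qh_ext mu be g) (1, s) = qh_d1_profile mu be g s.
Proof.
  intros hg. rewrite d1_qh_ext, qh_ext_at_1; [reflexivity | lra |].
  rewrite Rpower_1_l, Rmult_1_r. exact hg.
Qed.

Lemma d2_qh_ext_at_1 (mu be : R) (g : R -> R) (s : R) :
  ex_derive g s -> Defs.d2 (qh_ext mu be g) (1, s) = Derive g s.
Proof.
  intros hg. rewrite d2_qh_ext, qh_ext_at_1; [reflexivity |].
  rewrite Rpower_1_l, Rmult_1_r. exact hg.
Qed.

Lemma d1_qh_ext_locally (mu be : R) (g : R -> R) (s : R) :
  locally s (ex_derive g) ->
  locally_2d (fun u v => Defs.d1 (qh_ext mu be g) (u, v)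
                         = qh_ext (mu - 1) be (qh_d1_profile mu be g) (u, v)) 1 s.
Proof.
  intros Hg.
  eapply locally_2d_impl; [apply locally_2d_forall | exact (locally_2d_qh_chart be s _ Hg)].
  intros u v [hu hw]. exact (d1_qh_ext mu be g u v hu hw).
Qed.

Lemma d2_qh_ext_locally (mu be : R) (g : R -> R) (s : R) :
  locally s (ex_derive g) ->
  locally_2d (fun u v => Defs.d2 (qh_ext mu be g) (u, v)
                         = qh_ext (mu - be) be (Derive g) (u, v)) 1 s.
Proof.
  intros Hg.
  eapply locally_2d_impl; [apply locally_2d_forall | exact (locally_2d_qh_chart be s _ Hg)].
  intros u v [_ hw]. exact (d2_qh_ext mu be g u v hw).
Qed.

Lemma hess_qh_ext (mu be : R) (g : R -> R) (s : R) :
  locally s (fun v => ex_derive g v /\ ex_derive (Derive g) v) ->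
  let g1 := Derive g s in
  let g2 := Derive (Derive g) s in
  hess 1 1 (qh_ext mu be g) (1, s)
    = mu * (mu - 1) * g s - be * s * (2 * mu - 1 - be) * g1 + be ^ 2 * s ^ 2 * g2 /\
  hess 1 2 (qh_ext mu be g) (1, s) = (mu - be) * g1 - be * s * g2 /\
  hess 2 1 (qh_ext mu be g) (1, s) = (mu - be) * g1 - be * s * g2 /\
  hess 2 2 (qh_ext mu be g) (1, s) = g2.
Proof.
  intros Hg g1 g2.
  destruct (locally_singleton _ _ Hg) as [hg1 hg2].
  assert (Hg1 : locally s (ex_derive g)) by exact (filter_imp _ _ (fun v H => proj1 H) Hg).
  assert (Hh : is_derive (qh_d1_profile mu be g) s ((mu - be) * g1 - be * s * g2)).
  { unfold qh_d1_profile, g1, g2. auto_derive.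
    - auto.
    - change (fun x : R => g x) with g. change (fun x : R => Derive g x) with (Derive g). ring. }
  unfold hess; simpl.
  rewrite (d1_ext_locally _ _ _ _ (d1_qh_ext_locally mu be g s Hg1)),
          (d2_ext_locally _ _ _ _ (d1_qh_ext_locally mu be g s Hg1)),
          (d1_ext_locally _ _ _ _ (d2_qh_ext_locally mu be g s Hg1)),
          (d2_ext_locally _ _ _ _ (d2_qh_ext_locally mu be g s Hg1)).
  set (h := qh_d1_profile mu be g) in *.
  rewrite d1_qh_ext_at_1, d2_qh_ext_at_1 by (eexists; exact Hh).
  rewrite d1_qh_ext_at_1, d2_qh_ext_at_1 by exact hg2.
  unfold qh_d1_profile. rewrite (is_derive_unique _ _ _ Hh).
  unfold h, qh_d1_profile. fold g1 g2. repeat split; ring.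
Qed.

Lemma hess_homogeneous (a1 a2 a b m s : R) (f : R * R -> R) (ha1 : 0 < a1)
  (Hhom : forall x t, Vab a1 a2 a b x -> 0 < t ->
            f (dil a1 a2 t x) = Rpower t m * f x) :
  a < s < b ->
  let mu := m / a1 in
  let be := a2 / a1 in
  let g := fun v => f (1, v) in
  let g1 := Derive g s in
  let g2 := Derive (Derive g) s in
  locally s (fun v => ex_derive g v /\ ex_derive (Derive g) v) ->
  hess 1 1 f (1, s)
    = mu * (mu - 1) * g s - be * s * (2 * mu - 1 - be) * g1 + be ^ 2 * s ^ 2 * g2 /\
  hess 1 2 f (1, s) = (mu - be) * g1 - be * s * g2 /\
  hess 2 1 f (1, s) = (mu - be) * g1 - be * s * g2 /\
  hess 2 2 f (1, s) = g2.
Proof.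
  intros hs mu be g g1 g2 Hg.
  rewrite !(hess_ext_locally _ _ f _ _ _
              (homogeneous_qh_ext_locally a1 a2 a b m s f ha1 Hhom hs)).
  exact (hess_qh_ext mu be g s Hg).
Qed.

Lemma Derive_lin_comb (g1 g2 : R -> R) (z1 z2 x : R) :
  ex_derive g1 x -> ex_derive g2 x ->
  Derive (fun v => g1 v * z1 + g2 v * z2) x = Derive g1 x * z1 + Derive g2 x * z2.
Proof.
  intros h1 h2. apply is_derive_unique. auto_derive; [auto|].
  change (fun x : R => g1 x) with g1. change (fun x : R => g2 x) with g2. ring.
Qed.

Theorem lemma2p3 (a1 a2 a b m : R) (phi1 phi2 : R * R -> R)
  (ha1 : 0 < a1) (ha2 : 0 < a2) (ha12 : a1 <> a2) (hab : a < b)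
  (H1_1 : analytic_on (Vab a1 a2 a b) phi1)
  (H1_2 : analytic_on (Vab a1 a2 a b) phi2)
  (hm : 3 * (a1 + a2) <= m)
  (H2_1 : forall x t, Vab a1 a2 a b x -> 0 < t ->
            phi1 (dil a1 a2 t x) = Rpower t m * phi1 x)
  (H2_2 : forall x t, Vab a1 a2 a b x -> 0 < t ->
            phi2 (dil a1 a2 t x) = Rpower t m * phi2 x) :
  let G := fun (z : R * R) (s : R) => phi1 (1, s) * fst z + phi2 (1, s) * snd z in
  forall (z : R * R) (s : R),
    fst z ^ 2 + snd z ^ 2 = 1 -> a < s < b ->
    let Gs := Derive (G z) s in
    let Gss := Derive (fun u => Derive (G z) u) s in
    a1 ^ 2 * det_comb_hess (fst z) (snd z) phi1 phi2 (1, s)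
    = m * (m - a1) * (G z s * Gss)
      + a2 * (a1 - a2) * s * (Gs * Gss)
      - (m - a2) ^ 2 * Gs ^ 2.
Proof.
  intros G z s _ hs Gs Gss.
  set (g1 := fun v => phi1 (1, v)).
  set (g2 := fun v => phi2 (1, v)).
  assert (C1 : locally s (fun v => ex_derive g1 v /\ ex_derive (Derive g1) v))
    by exact (analytic_at_slice_C2 phi1 (1, s) (H1_1 _ (Vab_line a1 a2 a b s hs))).
  assert (C2 : locally s (fun v => ex_derive g2 v /\ ex_derive (Derive g2) v))
    by exact (analytic_at_slice_C2 phi2 (1, s) (H1_2 _ (Vab_line a1 a2 a b s hs))).
  destruct (hess_homogeneous a1 a2 a b m s phi1 ha1 H2_1 hs C1) as [A11 [A12 [A21 A22]]].
  destruct (hess_homogeneous a1 a2 a b m s phi2 ha1 H2_2 hs C2) as [B11 [B12 [B21 B22]]].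
  assert (DG : locally s (fun u =>
    Derive (G z) u = Derive g1 u * fst z + Derive g2 u * snd z)).
  { generalize (filter_and _ _ C1 C2). apply filter_imp.
    intros u [[d1 _] [d2 _]]. exact (Derive_lin_comb g1 g2 _ _ u d1 d2). }
  assert (EGss : Gss = Derive (Derive g1) s * fst z + Derive (Derive g2) s * snd z).
  { unfold Gss. etransitivity; [exact (Derive_ext_loc _ _ _ DG)|].
    apply Derive_lin_comb; [exact (proj2 (locally_singleton _ _ C1)) |
                            exact (proj2 (locally_singleton _ _ C2))]. }
  unfold Gs. rewrite EGss, (locally_singleton _ _ DG).
  unfold det_comb_hess; cbv zeta.
  rewrite A11, A12, A21, A22, B11, B12, B21, B22.
  unfold G, g1, g2; cbv beta. field. lra.
Qed.
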